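(* Let $n>1$ be an integer and let $R$ be an $n$-adically closed ring. Assume that for every prime ideal $p\subset R$ and all $a,b\in R$ with $a\notin p$ and $b\in p$, the polynomial $T^n+aT^{n-1}+b\in R[T]$ has a root $\alpha\in R\setminus p$. Then for any two prime ideals $P,Q$ of $R$, either $P+Q=R$ or $P+Q$ is a prime ideal.
   Context: All rings are commutative with $1$. A ring $R$ is $n$-adically closed if every monic polynomial of degree $n$ with coefficients in $R$ has a root in $R$. *)

(* Ideals are represented as Prop-valued predicates, since the
   sum P + Q of two ideals is not a decidable (boolean) predicate in general. *)
From HB Require Import structures.
From mathcomp Require Import all_boot all_order all_algebra.
Set Implicit Arguments. Unset Strict Implicit. Unset Printing Implicit Defensive.
Import GRing.Theory.
Local Open Scope ring_scope.

Definition is_ideal (R : comNzRingType) (I : R -> Prop) : Prop :=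
  I 0 /\ (forall x y, I x -> I y -> I (x + y)) /\ (forall a x, I x -> I (a * x)).

Definition is_prime_ideal (R : comNzRingType) (I : R -> Prop) : Prop :=
  is_ideal I /\ ~ I 1 /\ (forall x y, I (x * y) -> I x \/ I y).

Definition ideal_sum (R : comNzRingType) (P Q : R -> Prop) : R -> Prop :=
  fun x => exists p q, P p /\ Q q /\ x = p + q.

Definition n_adically_closed (R : comNzRingType) (n : nat) : Prop :=
  forall f : {poly R}, f \is monic -> size f = n.+1 -> exists x : R, root f x.

From HB Require Import structures.
From mathcomp Require Import all_boot all_order all_algebra.
From mathcomp Require Import ring zify.
From Stdlib Require Import Classical.
Import GRing.Theory.
Local Open Scope ring_scope.

(* 1. I is radical.  It suffices to extract square roots.  If z^2 = p + q,
      choose a with a^n = q (n even), resp. a root of a monic polynomial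
      X^n - q K(X) (n odd); then a lies in Q, and modulo P the element
      a^n - z^2 K(a) splits into factors linear in z, one of which lies in P.
      Each such factor exhibits z, or z times a unit, as an element of I.
   2. Key step: if xy is in I, y is not in P and x + y is not in P, then a
      root alpha outside P of T^n + (x+y)T^(n-1) + (-x)^(n-2) p (xy = p + q)
      gives a factorisation forcing y in I, or (-x)^(n-1) in I, whence x in I
      by radicality.
   3. The hypothesis x + y not in P is removed by translating x by an
      element of Q \ P (if Q is contained in P then I = P is prime). *)

Definition avoiding_roots (R : comNzRingType) (n : nat) : Prop :=
  forall p : R -> Prop, is_prime_ideal p ->
    forall a b : R, ~ p a -> p b ->
      exists alpha : R,
        root ('X^n + a%:P * 'X^(n.-1) + b%:P) alpha /\ ~ p alpha.

Section IdealFacts.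
Context {R : comNzRingType} {I : R -> Prop} (idealI : is_ideal I).

Lemma ideal_add {x y} : I x -> I y -> I (x + y).
Proof. by case: idealI => _ [addI _]; apply: addI. Qed.

Lemma ideal_mull a {x} : I x -> I (a * x).
Proof. by case: idealI => _ [_ mulI]; apply: mulI. Qed.

Lemma ideal_mulr {x} a : I x -> I (x * a).
Proof. by rewrite mulrC; apply: ideal_mull. Qed.

Lemma ideal_opp {x} : I x -> I (- x).
Proof. by move/(ideal_mull (-1)); rewrite mulN1r. Qed.

Lemma ideal_exp {x} k : I x -> I (x ^+ k.+1).
Proof. by rewrite exprSr; apply: ideal_mull. Qed.

Lemma ideal_unit_cancel c d {x} : c * d = 1 -> I (c * x) -> I x.
Proof. by move=> cd /(ideal_mull d); rewrite mulrA [d * c]mulrC cd mul1r. Qed.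

Lemma ideal_full : I 1 -> forall x, I x.
Proof. by move=> I1 x; rewrite -[x]mulr1; apply: ideal_mull. Qed.

End IdealFacts.

Section PrimeFacts.
Context {R : comNzRingType} {P : R -> Prop} (primeP : is_prime_ideal P).

Lemma prime_mul {x y} : P (x * y) -> P x \/ P y.
Proof. by case: primeP => _ [_]; apply. Qed.

Lemma prime_exp x k : P (x ^+ k.+1) -> P x.
Proof.
elim: k => [|k IH]; first by rewrite expr1.
by rewrite exprS => /prime_mul [].
Qed.

End PrimeFacts.

Section IdealSum.
Context {R : comNzRingType} {P Q : R -> Prop}.

Lemma sum_ideal : is_ideal P -> is_ideal Q -> is_ideal (ideal_sum P Q).
Proof.
move=> idealP idealQ; split; first by exists 0, 0; case: idealP; case: idealQ; rewrite addr0.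
split=> [x y [p1 [q1 [Pp1 [Qq1 ->]]]] [p2 [q2 [Pp2 [Qq2 ->]]]] | a x [p [q [Pp [Qq ->]]]]].
- exists (p1 + p2), (q1 + q2).
  by split; [exact: ideal_add | split; [exact: ideal_add | ring]].
- exists (a * p), (a * q).
  by split; [exact: ideal_mull | split; [exact: ideal_mull | ring]].
Qed.

Lemma in_sum {p q x} : P p -> Q q -> x = p + q -> ideal_sum P Q x.
Proof. by move=> Pp Qq ->; exists p, q. Qed.

Lemma sumP {x} : is_ideal Q -> P x -> ideal_sum P Q x.
Proof. by case=> Q0 _ Px; apply: (in_sum Px Q0); rewrite addr0. Qed.

Lemma sumQ {x} : is_ideal P -> Q x -> ideal_sum P Q x.
Proof. by case=> P0 _ Qx; apply: (in_sum P0 Qx); rewrite add0r. Qed.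

End IdealSum.

Lemma geometric_factor {R : comNzRingType} (x y : R) k :
  exists S, (x - y) * S = x ^+ k - y ^+ k.
Proof. by exists (\sum_(i < k) x ^+ (k.-1 - i) * y ^+ i); rewrite subrXX. Qed.

Lemma size_add_le (R : comNzRingType) (p q : {poly R}) m :
  (size p <= m)%N -> (size q <= m)%N -> (size (p + q)%R <= m)%N.
Proof. by move=> sp sq; rewrite (leq_trans (size_polyD _ _)) // geq_max sp. Qed.

Lemma size_monomial_le (R : comNzRingType) (c : R) i m :
  (i < m)%N -> (size (c *: 'X^i) <= m)%N.
Proof. by move=> lt_im; rewrite (leq_trans (size_scale_leq _ _)) // size_polyXn. Qed.

Section Closedness.
Context {R : comNzRingType} {n : nat}.
Hypotheses (n_gt0 : (0 < n)%N) (closedR : n_adically_closed R n).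

Lemma root_Xn_add (r : {poly R}) : (size r <= n)%N -> exists x, x ^+ n + r.[x] = 0.
Proof.
move=> size_r; have lt_r : (size r < size ('X^n : {poly R}))%N by rewrite size_polyXn.
have [x /rootP rx] : exists x, root ('X^n + r) x.
  apply: closedR; first by rewrite monicE lead_coefDl // lead_coefXn.
  by rewrite size_polyDl // size_polyXn.
by exists x; rewrite hornerD hornerXn in rx.
Qed.

Lemma nth_root (c : R) : exists a, a ^+ n = c.
Proof.
have [|a ha] := root_Xn_add (- c%:P).
  by rewrite size_polyN (leq_trans (size_polyC_leq1 _)).
rewrite hornerN hornerC in ha.
by exists a; rewrite -[c]add0r -ha; ring.
Qed.

(* There is an s such that both s and s - 1 are units. *)
Lemma unit_pair : exists s : R, s ^+ n.-1 * (s - 1) = 1.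
Proof.
have [|s hs] := root_Xn_add (- 'X^(n.-1) - 1).
  by apply: size_add_le; rewrite size_polyN ?size_polyXn ?prednK // size_polyC oner_neq0.
exists s; rewrite hornerD !hornerN hornerXn hornerC in hs.
rewrite -[in s ^+ n](prednK n_gt0) exprSr in hs.
by rewrite -[RHS]add0r -hs; ring.
Qed.

End Closedness.

Lemma even_or_odd_ge2 {n : nat} : (1 < n)%N ->
  exists k, n = (k.+1 + k.+1)%N \/ n = (k + k).+3%N.
Proof.
rewrite -(odd_double_half n); case: (odd n) (n./2) => [] [|k] //= _;
  exists k; rewrite -addnn; lia.
Qed.

Section Radical.
Context {R : comNzRingType} {P Q : R -> Prop}.
Hypotheses (primeP : is_prime_ideal P) (primeQ : is_prime_ideal Q).
Let idealP : is_ideal P := primeP.1.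
Let idealQ : is_ideal Q := primeQ.1.
Local Notation I := (ideal_sum P Q).

(* Even degree: with a^n = q and u = a^(n/2) in Q, (u - z)(u + z) = -p. *)
Lemma sum_sqrt_even k z :
  n_adically_closed R (k.+1 + k.+1) -> I (z ^+ 2) -> I z.
Proof.
move=> closedR [p [q [Pp [Qq hz]]]].
have [a ha] := nth_root (isT : (0 < k.+1 + k.+1)%N) closedR q.
set u := a ^+ k.+1.
have Qa : Q a by apply: (prime_exp primeQ a (k + k.+1)); rewrite -addSn ha.
have Qu : Q u by apply: ideal_exp.
have : P ((u - z) * (u + z)).
  have uu : u * u = q by rewrite -ha -exprD.
  have -> : (u - z) * (u + z) = - p by ring: hz uu.
  exact: ideal_opp.
case/(prime_mul primeP) => [Pm | Pp'].
- by apply: (in_sum (ideal_opp idealP Pm) Qu); ring.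
- by apply: (in_sum Pp' (ideal_opp idealQ Qu)); ring.
Qed.

(* Odd degree n = 2j + 3.  Let s^(n-1) (s - 1) = 1 and let a be a root of
   X^n - q K(X), where K(X) = X^(2j+1) - sX^(j+1) + s^2 X + zsX^j - zs^2.
   Then a lies in Q and, writing u = a^j,
   (ua + zs)(ua + z(u - s))(a - z) = a^n - z^2 K(a) = -p K(a) lies in P. *)
Lemma sum_sqrt_odd j z :
  n_adically_closed R (j + j).+3 -> I (z ^+ 2) -> I z.
Proof.
move=> closedR [p [q [Pp [Qq hz]]]].
have [s hs] := unit_pair (isT : (0 < (j + j).+3)%N) closedR.
rewrite /= exprS in hs; set t := s ^+ (j + j).+1 in hs; clearbody t.
pose K : {poly R} := 1 *: 'X^((j + j).+1) + (- s) *: 'X^(j.+1) + (s * s) *: 'X^1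
  + (z * s) *: 'X^j + (- (z * s * s)) *: 'X^0.
have [a ha] : exists a, a ^+ (j + j).+3 = q * K.[a].
  have [|a ha] := root_Xn_add closedR (- (q *: K)).
    rewrite size_polyN (leq_trans (size_scale_leq _ _)) //.
    by rewrite /K; repeat apply: size_add_le; apply: size_monomial_le; lia.
  by exists a; apply/eqP; rewrite -subr_eq0 -hornerZ -hornerN ha.
set u := a ^+ j.
have Ka : K.[a] = u * u * a - s * u * a + s * s * a + z * s * u - z * s * s.
  by rewrite /K !hornerE !exprSr exprD -/u; ring.
have Qa : Q a.
  by apply: (prime_exp primeQ a (j + j).+2); rewrite ha; apply: ideal_mulr.
have an : a ^+ (j + j).+3 = u * u * a * a * a by rewrite !exprSr exprD.
have factor : (u * a + z * s) * (u * a + z * (u - s)) * (a - z) = - (p * K.[a]).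
  have -> : (u * a + z * s) * (u * a + z * (u - s)) * (a - z) = a ^+ (j + j).+3 - z ^+ 2 * K.[a].
    by rewrite an Ka; ring.
  by rewrite ha hz; ring.
have idealI := sum_ideal idealP idealQ.
have zsI : I (s * z) -> I z by apply: (ideal_unit_cancel idealI s (t * (s - 1))); rewrite mulrA.
have Qua : Q (u * a) by apply: ideal_mull.
have : P ((u * a + z * s) * (u * a + z * (u - s)) * (a - z)).
  by rewrite factor; apply/ideal_opp/ideal_mulr.
case/(prime_mul primeP) => [/(prime_mul primeP) [Pf1 | Pf2] | Pf3].
- by apply: zsI; apply: (in_sum Pf1 (ideal_opp idealQ Qua)); ring.
- have [j0 | j_gt0] := posnP j.
  + (* u = 1, and 1 - s is a unit *)
    have u1 : u = 1 by rewrite /u j0 expr0.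
    apply: (ideal_unit_cancel idealI (1 - s) (- (s * t))); first by rewrite -[RHS]hs; ring.
    by apply: (in_sum Pf2 (ideal_opp idealQ Qa)); rewrite u1; ring.
  +
    have Qu : Q u by rewrite /u -(prednK j_gt0); apply: ideal_exp.
    apply: zsI; apply: (in_sum (ideal_opp idealP Pf2)
      (ideal_add idealQ Qua (ideal_mull idealQ z Qu))); ring.
- by apply: (in_sum (ideal_opp idealP Pf3) Qa); ring.
Qed.

Lemma sum_sqrt {n z} : (1 < n)%N -> n_adically_closed R n -> I (z ^+ 2) -> I z.
Proof.
move=> n_gt1; have [k [-> | ->]] := even_or_odd_ge2 n_gt1.
- exact: sum_sqrt_even.
- exact: sum_sqrt_odd.
Qed.

Lemma sum_radical {n z m} : (1 < n)%N -> n_adically_closed R n -> I (z ^+ m.+1) -> I z.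
Proof.
move=> n_gt1 closedR; elim: m => [|m IH]; first by rewrite expr1.
move=> Izm; apply/IH/(sum_sqrt n_gt1 closedR).
have -> : (z ^+ m.+1) ^+ 2 = z ^+ m.+2 * z ^+ m by rewrite -exprM -exprD; congr (_ ^+ _); lia.
exact: (ideal_mulr (sum_ideal idealP idealQ)).
Qed.

End Radical.

Section Primality.
Context {n : nat} {R : comNzRingType} {P Q : R -> Prop}.
Hypotheses (n_gt1 : (1 < n)%N) (closedR : n_adically_closed R n).
Hypotheses (avoidR : avoiding_roots R n).
Hypotheses (primeP : is_prime_ideal P) (primeQ : is_prime_ideal Q).
Let idealP : is_ideal P := primeP.1.
Let idealQ : is_ideal Q := primeQ.1.
Local Notation I := (ideal_sum P Q).

(* Write n = m + 2, xy = p + q, w = (-x)^m, and let alpha be a root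
   outside P of T^n + (x + y)T^(n-1) + wp; put v = alpha^(m+1).  Then
   v (alpha + x + y) = -wp, so alpha + x + y lies in P.  With
   (alpha + x) S = v - (-x)^(m+1) and G = v + yS one gets (alpha + x) G = wq,
   so alpha + x or G lies in Q; the first case gives y in I, the second
   gives (-x)^(m+1) in I, hence x in I by radicality. *)
Lemma sum_mul_key {x y} : I (x * y) -> ~ P y -> ~ P (x + y) -> I x \/ I y.
Proof.
move=> [p [q [Pp [Qq hxy]]]] nPy nPxy.
have [m n_eq] : exists m, n = m.+2 by exists n.-2; lia.
set w := (- x) ^+ m.
have [al [root_al nPal]] := avoidR P primeP _ _ nPxy (ideal_mull idealP w Pp).
move/rootP: root_al; rewrite n_eq !hornerE /= exprS => root_al.
set v := al ^+ m.+1 in root_al.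
have hv : v * (al + x + y) = - (w * p) by rewrite -[RHS]add0r -root_al; ring.
have Pxya : P (al + x + y).
  have : P (v * (al + x + y)) by rewrite hv; apply/ideal_opp/ideal_mull.
  by case/(prime_mul primeP) => // /(prime_exp primeP).
have [S hS] := geometric_factor al (- x) m.+1.
rewrite -/v exprS -/w in hS.
set G := v + y * S.
have hG : (al + x) * G = w * q.
  have -> : (al + x) * G = v * (al + x + y) + y * ((al - - x) * S)
      - y * (v - (- x) * w) + x * y * w by rewrite /G; ring.
  by rewrite hS hv hxy; ring.
have : Q ((al + x) * G) by rewrite hG; apply: ideal_mull.
case/(prime_mul primeQ) => [Qalx | QG].
  by right; apply: (in_sum Pxya (ideal_opp idealQ Qalx)); ring.
left.
have : P (y * (G + x * w)).
  have -> : y * (G + x * w) = (al + x + y) * (y * S)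
      - y * ((al - - x) * S - (v - (- x) * w)) by rewrite /G; ring.
  by rewrite hS subrr mulr0 subr0; apply: ideal_mulr.
case/(prime_mul primeP) => // PGxw.
have Ix : I ((- x) ^+ m.+1).
  by apply: (in_sum (ideal_opp idealP PGxw) QG); rewrite exprS -/w; ring.
rewrite -[x]opprK; apply: (ideal_opp (sum_ideal idealP idealQ)).
exact: (sum_radical primeP primeQ n_gt1 closedR Ix).
Qed.

(* If Q is contained in P
   then P + Q = P; otherwise the condition x + y not in P of the key step is
   arranged by replacing x with x + q1 for some q1 in Q \ P. *)
Lemma sum_mul_prime x y : I (x * y) -> I x \/ I y.
Proof.
move=> Ixy; have idealI := sum_ideal idealP idealQ.
case: (classic (exists q1, Q q1 /\ ~ P q1)) => [[q1 [Qq1 nPq1]] | QsubP].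
- case: (classic (P y)) => [Py | nPy]; first by right; apply: sumP.
  case: (classic (P (x + y))) => [Pxy | nPxy]; last exact: sum_mul_key.
  have Ixqy : I ((x + q1) * y).
    by rewrite mulrDl; apply: (ideal_add idealI Ixy); apply/sumQ/ideal_mulr.
  have nPxqy : ~ P (x + q1 + y).
    move=> Pxqy; apply: nPq1; have -> : q1 = (x + q1 + y) - (x + y) by ring.
    exact: (ideal_add idealP Pxqy (ideal_opp idealP Pxy)).
  case: (sum_mul_key Ixqy nPy nPxqy) => [Ixq | Iy]; last by right.
  left; have -> : x = (x + q1) - q1 by ring.
  exact: (ideal_add idealI Ixq (ideal_opp idealI (sumQ idealP Qq1))).
- case: Ixy => [p [q [Pp [Qq hxy]]]].
  have Pq : P q by apply: NNPP => nPq; apply: QsubP; exists q.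
  have : P (x * y) by rewrite hxy; apply: ideal_add.
  by case/(prime_mul primeP) => [Px | Py]; [left | right]; apply: sumP.
Qed.

End Primality.

Theorem mainTheorem4 (n : nat) (R : comNzRingType) :
  (1 < n)%N ->
  n_adically_closed R n ->
  (forall p : R -> Prop, is_prime_ideal p ->
     forall a b : R, ~ p a -> p b ->
       exists alpha : R,
         root ('X^n + a%:P * 'X^(n.-1) + b%:P) alpha /\ ~ p alpha) ->
  forall P Q : R -> Prop, is_prime_ideal P -> is_prime_ideal Q ->
    (forall x : R, ideal_sum P Q x) \/ is_prime_ideal (ideal_sum P Q).
Proof.
move=> n_gt1 closedR avoidR P Q primeP primeQ.
have idealI := sum_ideal primeP.1 primeQ.1.
case: (classic (ideal_sum P Q 1)) => [I1 | nI1].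
  by left; apply: ideal_full.
right; split=> //; split=> // x y.
exact: (sum_mul_prime n_gt1 closedR avoidR primeP primeQ).
Qed.
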